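(* Consider the scalar system $\dot x=b(t)u+a(t)x^2$, where $x,u\in\mathbb{R}$. Let $\lambda>0$, $k>0$, $\gamma_a>0$, $\mu(t)=e^{\lambda t}$ and $s=\mu x$. Let $\mathcal N$ be an enhanced Nussbaum function. Apply the controller $$u=\mathcal N(\xi)\bar u,\qquad \dot\xi=\mu s\bar u,\qquad \bar u=(k+\lambda)x+\kappa(\hat a,x)x,\qquad \dot{\hat a}=\gamma_a\mu s x^2,$$ where $$\kappa(\hat a,x)=\tfrac12\big((\hat a x)^2+1\big)+\tfrac{\delta_{\Delta_a}}2(x^2+1),$$ and take $\xi(0)\ge0$. Then: 1. $\dot\xi=(k+\lambda+\kappa)s^2\ge0$. 2. $V=\tfrac12s^2+\tfrac1{2\gamma_a}(\ell_a-\hat a)^2$ satisfies $\dot V\le-ks^2+(b(t)\mathcal N(\xi)+1)\dot\xi$. 3. $V$ and $\xi$ are bounded on $[0,\infty)$, all closed-loop signals are bounded, and $|x(t)|\le Ce^{-\lambda t}$ for some constant $C$ depending on the initial conditions.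
   Context: $a(t)$ is an unknown, piecewise continuous, time-varying scalar parameter. There is an unknown constant $\ell_a$ and a known constant $\delta_{\Delta_a}>0$ such that $|a(t)-\ell_a|\le\delta_{\Delta_a}$ for all $t$. $b(t)$ is unknown and time-varying, with $b(t)\in[\underline b,\bar b]$ for unknown constants $\underline b\,\bar b>0$. Thus its sign is unknown but constant. Enhanced Nussbaum function: a $\mathcal C^\infty$ function $\mathcal N:[0,\infty)\to\mathbb{R}$, not identically zero, with $\mathcal N^+=\max\{0,\mathcal N\}$ and $\mathcal N^-=\max\{0,-\mathcal N\}$, satisfying - $\lim_{\xi\to\infty}\frac1\xi\int_0^\xi\mathcal N^{\pm}=\infty$; - $\limsup_{\xi\to\infty}\int_0^\xi\mathcal N^+/\int_0^\xi\mathcal N^-=\infty$; - $\limsup_{\xi\to\infty}\int_0^\xi\mathcal N^-/\int_0^\xi\mathcal N^+=\infty$. *)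

From Stdlib Require Import Reals Lra List.
From Coquelicot Require Import Coquelicot.
Open Scope R_scope.

Definition Npos (N : R -> R) (x : R) : R := Rmax 0 (N x).
Definition Nneg (N : R -> R) (x : R) : R := Rmax 0 (- N x).

(* Enhanced Nussbaum function (N given on R; only its values on [0,oo) matter).
   limsup_{xi->oo} f xi = +oo  is written  forall M X, exists xi >= X, f xi > M. *)
Definition enhanced_nussbaum (N : R -> R) : Prop :=
  (forall (n : nat) (t : R), ex_derive (Derive_n N n) t) /\
  (exists t, 0 <= t /\ N t <> 0) /\
  filterlim (fun xi => RInt (Npos N) 0 xi / xi) (Rbar_locally p_infty) (Rbar_locally p_infty) /\
  filterlim (fun xi => RInt (Nneg N) 0 xi / xi) (Rbar_locally p_infty) (Rbar_locally p_infty) /\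
  (forall M X : R, exists xi, X <= xi /\ M < RInt (Npos N) 0 xi / RInt (Nneg N) 0 xi) /\
  (forall M X : R, exists xi, X <= xi /\ M < RInt (Nneg N) 0 xi / RInt (Npos N) 0 xi).

Definition locally_finite (D : R -> Prop) : Prop :=
  forall T : R, exists l : list R, forall t, D t -> 0 <= t <= T -> In t l.

Definition piecewise_continuous (f : R -> R) (D : R -> Prop) : Prop :=
  locally_finite D /\
  (forall t, 0 < t -> ~ D t -> continuous f t) /\
  (forall t, 0 <= t -> D t ->
     (exists l, filterlim f (at_right t) (locally l)) /\
     (0 < t -> exists l, filterlim f (at_left t) (locally l))).

Definition kappa (delta ah x : R) : R :=
  / 2 * ((ah * x) ^ 2 + 1) + delta / 2 * (x ^ 2 + 1).

From Pilot Require Import Defs.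
From Stdlib Require Import Reals Lra List.
From Coquelicot Require Import Coquelicot.
Import ListNotations.
Open Scope R_scope.

(* Differentiating V along the closed loop, the gain kappa dominates the terms
   x (a - l_a) + x ahat, which gives V' <= -k s^2 + (b N(xi) + 1) xi'.  As xi' >= 0
   and b lies between bl and bu, b N(xi) xi' <= (bu N^+(xi) - bl N^-(xi)) xi', so
   V - Phi(xi) is nonincreasing, where
     Phi(z) = bu int_0^z N^+ - bl int_0^z N^- + z.
   Since V >= 0, Phi(xi(t)) stays above a fixed level.  Whatever the common sign
   of bl and bu, the enhanced Nussbaum property makes Phi dip below any level
   arbitrarily far out, so the nondecreasing xi is trapped below such a point.
   Then V is bounded, hence s and ahat are, and all other signals follow; the
   decay of x is |x| = exp(-lam t) |s|. *)

(** * Monotonicity and intermediate values on [0, +oo) *)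

Lemma nonincreasing_MVT (f : R -> R) (s t : R) :
  s <= t ->
  (forall u, s < u < t -> exists d, is_derive f u d /\ d <= 0) ->
  (forall u, s <= u <= t -> continuous f u) ->
  f t <= f s.
Proof.
  intros Hst Hd Hc.
  (* Capping the slope at 0 keeps it nonpositive even if the mean-value point
     returned by MVT_gen is an endpoint. *)
  destruct (MVT_gen f s t (fun u => Rmin 0 (Derive f u))) as [c [_ Hfc]].
  - rewrite Rmin_left, Rmax_right by lra. intros u Hu.
    destruct (Hd u Hu) as [d [Hfd Hd0]].
    rewrite (is_derive_unique f u d Hfd), Rmin_right by exact Hd0. exact Hfd.
  - rewrite Rmin_left, Rmax_right by lra. intros u Hu.
    apply continuity_pt_filterlim, Hc, Hu.
  - assert (Rmin 0 (Derive f c) * (t - s) <= 0).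
    { apply Rmult_le_0_r; [apply Rmin_l | lra]. }
    lra.
Qed.

Lemma nonincreasing_off_list (f : R -> R) (D : R -> Prop) (l : list R) :
  (forall u, 0 < u -> continuous f u) ->
  (forall u, 0 < u -> ~ D u -> exists d, is_derive f u d /\ d <= 0) ->
  forall s t, 0 < s <= t -> (forall u, s < u < t -> D u -> In u l) -> f t <= f s.
Proof.
  intros Hc Hd. induction l as [|c l IH]; intros s t Hst Hl.
  - apply nonincreasing_MVT; [lra | | intros u Hu; apply Hc; lra].
    intros u Hu. apply Hd; [lra|]. intros HDu. exact (Hl u Hu HDu).
  - assert (Hsub : forall s' t', s <= s' -> s' <= t' -> t' <= t -> ~ (s' < c < t') ->
                     f t' <= f s').
    { intros s' t' H1 H2 H3 Hc'. apply IH; [lra|]. intros u Hu HDu.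
      destruct (Hl u ltac:(lra) HDu) as [->|Hin]; [lra | exact Hin]. }
    destruct (Rlt_dec s c); [destruct (Rlt_dec c t)|].
    + apply Rle_trans with (f c); apply Hsub; lra.
    + apply Hsub; lra.
    + apply Hsub; lra.
Qed.

Lemma nonincreasing_from_0 (f : R -> R) (D : R -> Prop) :
  locally_finite D ->
  filterlim f (at_right 0) (locally (f 0)) ->
  (forall u, 0 < u -> continuous f u) ->
  (forall u, 0 < u -> ~ D u -> exists d, is_derive f u d /\ d <= 0) ->
  forall t, 0 <= t -> f t <= f 0.
Proof.
  intros HD H0 Hc Hd t Ht.
  destruct (Req_dec t 0) as [->|Ht0]; [lra|].
  destruct (HD t) as [l Hl].
  apply (closed_filterlim_loc f (fun y => f t <= y) (f 0) H0); [|apply closed_ge].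
  exists (mkposreal t ltac:(lra)). intros s Hs Hs0.
  change (Rabs (s - 0) < t) in Hs. rewrite Rminus_0_r, Rabs_pos_eq in Hs by lra.
  apply (nonincreasing_off_list f D l Hc Hd); [lra|].
  intros u Hu HDu. apply Hl; [exact HDu | lra].
Qed.

Lemma IVT_from_0 (f : R -> R) (y t : R) :
  filterlim f (at_right 0) (locally (f 0)) ->
  (forall u, 0 < u -> continuous f u) ->
  0 < t -> f 0 < y <= f t -> exists u, 0 < u /\ f u = y.
Proof.
  intros H0 Hc Ht [Hy0 Hyt].
  destruct (Req_dec (f t) y) as [E|Hne]; [now exists t|].
  assert (Hev : at_right 0 (fun u => (0 < u /\ u < t) /\ f u < y)).
  { apply filter_and; [apply filter_and|].
    - exists (mkposreal 1 Rlt_0_1). intros u _ Hu. exact Hu.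
    - exists (mkposreal t Ht). intros u Hu _.
      change (Rabs (u - 0) < t) in Hu. rewrite Rminus_0_r in Hu.
      apply Rabs_lt_between in Hu. lra.
    - exact (H0 (fun z => z < y) (open_lt y (f 0) Hy0)). }
  destruct (Hierarchy.filter_ex _ Hev) as [e [[He0 Het] Hey]].
  destruct (Ranalysis5.IVT_interv (fun v => f v - y) e t) as [u [Hu Hfu]];
    [| lra | lra | lra |].
  - intros v Hv. apply continuity_pt_filterlim.
    exact (continuous_minus f (fun _ => y) v (Hc v ltac:(lra)) (continuous_const y v)).
  - exists u. split; lra.
Qed.

Section RealFilterLimits.
Context {F : (R -> Prop) -> Prop} {FF : Filter F}.

Lemma filterlim_Rplus (f g : R -> R) (lf lg : R) :
  filterlim f F (locally lf) -> filterlim g F (locally lg) ->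
  filterlim (fun t => f t + g t) F (locally (lf + lg)).
Proof.
  intros Hf Hg. apply (filterlim_comp_2 f g Rplus Hf Hg).
  apply (@filterlim_plus R_AbsRing R_NormedModule).
Qed.

Lemma filterlim_Rmult (f g : R -> R) (lf lg : R) :
  filterlim f F (locally lf) -> filterlim g F (locally lg) ->
  filterlim (fun t => f t * g t) F (locally (lf * lg)).
Proof.
  intros Hf Hg. apply (filterlim_comp_2 f g Rmult Hf Hg).
  apply (@filterlim_mult R_AbsRing).
Qed.

Lemma filterlim_continuous_comp (h f : R -> R) (l : R) :
  filterlim f F (locally l) -> continuous h l ->
  filterlim (fun t => h (f t)) F (locally (h l)).
Proof. intros Hf Hh. exact (filterlim_comp _ _ _ f h F _ _ Hf Hh). Qed.

End RealFilterLimits.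

Lemma continuous_at_right (f : R -> R) (t : R) :
  continuous f t -> filterlim f (at_right t) (locally (f t)).
Proof.
  intros Hf.
  exact (filterlim_filter_le_1 f (@filter_le_within R (locally t) _ (fun u => t < u)) Hf).
Qed.

(** * Boundedness on [0, +oo) *)

Definition bounded_on_nonneg (f : R -> R) : Prop :=
  exists M, forall t, 0 <= t -> Rabs (f t) <= M.

Lemma bounded_on_nonneg_const (c : R) : bounded_on_nonneg (fun _ => c).
Proof. exists (Rabs c). intros; lra. Qed.

Lemma bounded_on_nonneg_ext (f g : R -> R) :
  (forall t, 0 <= t -> f t = g t) -> bounded_on_nonneg g -> bounded_on_nonneg f.
Proof. intros E [M HM]. exists M. intros t Ht. rewrite E by exact Ht. auto. Qed.

Lemma bounded_on_nonneg_dominated (f g : R -> R) (c : R) :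
  (forall t, 0 <= t -> Rabs (f t) <= c * Rabs (g t)) ->
  bounded_on_nonneg g -> bounded_on_nonneg f.
Proof.
  intros Hfg [M HM]. exists (Rabs c * M). intros t Ht.
  apply Rle_trans with (Rabs c * Rabs (g t)).
  - apply Rle_trans with (1 := Hfg t Ht).
    apply Rmult_le_compat_r; [apply Rabs_pos | apply Rle_abs].
  - apply Rmult_le_compat_l; [apply Rabs_pos | exact (HM t Ht)].
Qed.

Lemma bounded_on_nonneg_plus (f g : R -> R) :
  bounded_on_nonneg f -> bounded_on_nonneg g -> bounded_on_nonneg (fun t => f t + g t).
Proof.
  intros [Mf Hf] [Mg Hg]. exists (Mf + Mg). intros t Ht.
  apply Rle_trans with (1 := Rabs_triang (f t) (g t)).
  apply Rplus_le_compat; auto.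
Qed.

Lemma bounded_on_nonneg_mult (f g : R -> R) :
  bounded_on_nonneg f -> bounded_on_nonneg g -> bounded_on_nonneg (fun t => f t * g t).
Proof.
  intros [Mf Hf] [Mg Hg]. exists (Mf * Mg). intros t Ht.
  rewrite Rabs_mult. apply Rmult_le_compat; auto using Rabs_pos.
Qed.

Lemma bounded_on_nonneg_pow (f : R -> R) (n : nat) :
  bounded_on_nonneg f -> bounded_on_nonneg (fun t => f t ^ n).
Proof.
  intros Hf. induction n as [|n IH].
  - exact (bounded_on_nonneg_const 1).
  - exact (bounded_on_nonneg_mult f (fun t => f t ^ n) Hf IH).
Qed.

Lemma bounded_on_nonneg_of_sqr (f : R -> R) :
  bounded_on_nonneg (fun t => f t ^ 2) -> bounded_on_nonneg f.
Proof.
  intros [M HM]. exists (1 + M). intros t Ht.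
  specialize (HM t Ht). rewrite Rabs_pos_eq in HM by apply pow2_ge_0.
  rewrite <- pow2_abs in HM. assert (0 <= Rabs (f t)) by apply Rabs_pos. nra.
Qed.

Lemma bounded_on_nonneg_continuous_comp (h f : R -> R) :
  (forall z, continuous h z) -> bounded_on_nonneg f ->
  bounded_on_nonneg (fun t => h (f t)).
Proof.
  intros Hh [M HM].
  assert (HM0 : 0 <= M) by (apply Rle_trans with (2 := HM 0 (Rle_refl 0)), Rabs_pos).
  destruct (continuity_ab_maj (fun z => Rabs (h z)) (- M) M) as [z [Hz _]]; [lra| |].
  { intros c _. apply continuity_pt_filterlim, continuous_Rabs_comp, Hh. }
  exists (Rabs (h z)). intros t Ht. apply Hz.
  apply Rabs_le_between, HM, Ht.
Qed.

Lemma bounded_on_nonneg_uniformly (fs : list (R -> R)) :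
  (forall f, In f fs -> bounded_on_nonneg f) ->
  exists M, forall t, 0 <= t -> forall f, In f fs -> Rabs (f t) <= M.
Proof.
  induction fs as [|f fs IH]; intros Hfs.
  - exists 0. intros t _ g [].
  - destruct (Hfs f (in_eq f fs)) as [Mf Hf].
    destruct IH as [M HM]; [intros g Hg; apply Hfs, in_cons, Hg|].
    exists (Rmax Mf M). intros t Ht g [<-|Hg].
    + apply Rle_trans with Mf; [exact (Hf t Ht) | apply Rmax_l].
    + apply Rle_trans with M; [exact (HM t Ht g Hg) | apply Rmax_r].
Qed.

(** * The Nussbaum integral bound *)

Lemma enhanced_nussbaum_continuous (N : R -> R) :
  enhanced_nussbaum N -> forall z, continuous N z.
Proof.
  intros [HNd _] z.
  exact (@ex_derive_continuous R_AbsRing R_NormedModule N z (HNd 0%nat z)).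
Qed.

Lemma continuous_Rmax_0 (y : R) : continuous (Rmax 0) y.
Proof.
  apply filterlim_locally. intros eps. exists eps. intros z Hz.
  change (Rabs (z - y) < eps) in Hz. change (Rabs (Rmax 0 z - Rmax 0 y) < eps).
  apply Rle_lt_trans with (2 := Hz).
  unfold Rmax. destruct (Rle_dec 0 z), (Rle_dec 0 y);
    unfold Rabs; repeat destruct Rcase_abs; lra.
Qed.

Lemma continuous_Npos (N : R -> R) (z : R) :
  (forall y, continuous N y) -> continuous (Defs.Npos N) z.
Proof.
  intros HN. apply (continuous_comp N (Rmax 0)); [apply HN | apply continuous_Rmax_0].
Qed.

Lemma continuous_Nneg (N : R -> R) (z : R) :
  (forall y, continuous N y) -> continuous (Defs.Nneg N) z.
Proof.
  intros HN. apply (continuous_comp (fun y => - N y) (Rmax 0)); [|apply continuous_Rmax_0].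
  apply (continuous_comp N Ropp); [apply HN|].
  apply (@filterlim_opp R_AbsRing R_NormedModule).
Qed.

Lemma N_eq_Npos_sub_Nneg (N : R -> R) (z : R) : N z = Defs.Npos N z - Defs.Nneg N z.
Proof.
  unfold Defs.Npos, Defs.Nneg, Rmax.
  destruct (Rle_dec 0 (N z)), (Rle_dec 0 (- N z)); lra.
Qed.

Lemma is_derive_RInt_from_0 (g : R -> R) (z : R) :
  (forall y, continuous g y) -> is_derive (fun y => RInt g 0 y) z (g z).
Proof.
  intros Hg. apply is_derive_RInt with 0; [|apply Hg].
  exists (mkposreal 1 Rlt_0_1). intros y _.
  apply RInt_correct, ex_RInt_continuous. intros; apply Hg.
Qed.

Lemma RInt_from_0_nonneg (g : R -> R) (z : R) :
  (forall y, continuous g y) -> (forall y, 0 <= g y) -> 0 <= z -> 0 <= RInt g 0 z.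
Proof.
  intros Hg Hg0 Hz. apply RInt_ge_0; [exact Hz | | intros; apply Hg0].
  apply (@ex_RInt_continuous R_CompleteNormedModule). intros; apply Hg.
Qed.

Definition nussbaum_integral_bound (bl bu : R) (N : R -> R) (z : R) : R :=
  bu * RInt (Defs.Npos N) 0 z - bl * RInt (Defs.Nneg N) 0 z + z.

Lemma mul_N_le_nussbaum_slope (N : R -> R) (b bl bu z : R) :
  bl <= b <= bu -> b * N z <= bu * Defs.Npos N z - bl * Defs.Nneg N z.
Proof.
  intros Hb. rewrite (N_eq_Npos_sub_Nneg N z).
  assert (0 <= (bu - b) * Defs.Npos N z) by (apply Rmult_le_pos; [lra | apply Rmax_l]).
  assert (0 <= (b - bl) * Defs.Nneg N z) by (apply Rmult_le_pos; [lra | apply Rmax_l]).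
  nra.
Qed.

Lemma is_derive_nussbaum_integral_bound (bl bu : R) (N : R -> R) (z : R) :
  (forall y, continuous N y) ->
  is_derive (nussbaum_integral_bound bl bu N) z
    (bu * Defs.Npos N z - bl * Defs.Nneg N z + 1).
Proof.
  intros HN. unfold nussbaum_integral_bound.
  set (P := fun y => RInt (Defs.Npos N) 0 y).
  set (Q := fun y => RInt (Defs.Nneg N) 0 y).
  assert (HP : is_derive P z (Defs.Npos N z))
    by (apply is_derive_RInt_from_0; intros; apply continuous_Npos, HN).
  assert (HQ : is_derive Q z (Defs.Nneg N z))
    by (apply is_derive_RInt_from_0; intros; apply continuous_Nneg, HN).
  auto_derive; [repeat split; eexists; eassumption|].
  replace (Derive (fun y => P y) z) with (Defs.Npos N z)
    by (symmetry; exact (is_derive_unique _ _ _ HP)).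
  replace (Derive (fun y => Q y) z) with (Defs.Nneg N z)
    by (symmetry; exact (is_derive_unique _ _ _ HQ)).
  ring.
Qed.

Lemma continuous_nussbaum_integral_bound (bl bu : R) (N : R -> R) (z : R) :
  (forall y, continuous N y) -> continuous (nussbaum_integral_bound bl bu N) z.
Proof.
  intros HN. apply (@ex_derive_continuous R_AbsRing R_NormedModule).
  eexists. apply is_derive_nussbaum_integral_bound, HN.
Qed.

Lemma ratio_escape (P Q : R -> R) (c1 c2 : R) :
  0 < c1 -> 0 < c2 ->
  (forall z, 0 <= z -> 0 <= P z) ->
  filterlim (fun z => Q z / z) (Rbar_locally p_infty) (Rbar_locally p_infty) ->
  (forall M X : R, exists z, X <= z /\ M < Q z / P z) ->
  forall M X, exists z, X <= z /\ c1 * P z - c2 * Q z + z < M.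
Proof.
  intros Hc1 Hc2 HP HQ Hratio M X.
  (* Take z >= |M| where c2 Q z exceeds both 4 z and 2 c1 P z; then
     c1 P z - c2 Q z + z < - z <= M. *)
  destruct (HQ (fun y => 4 / c2 < y)) as [Y HY]; [now exists (4 / c2)|].
  destruct (Hratio (2 * c1 / c2) (Rmax X (Rmax (Y + 1) (Rmax 1 (Rabs M)))))
    as [z [Hz HQP]].
  exists z. split; [apply Rle_trans with (2 := Hz), Rmax_l|].
  assert (HzY : Y + 1 <= z /\ 1 <= z /\ Rabs M <= z).
  { revert Hz. unfold Rmax. repeat destruct Rle_dec; lra. }
  assert (HQz : 4 / c2 < Q z / z) by (apply HY; simpl; lra).
  assert (HQ4 : 4 * z < c2 * Q z).
  { apply Rmult_lt_compat_r with (r := c2 * z) in HQz; [|nra].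
    replace (4 / c2 * (c2 * z)) with (4 * z) in HQz by (field; lra).
    replace (Q z / z * (c2 * z)) with (c2 * Q z) in HQz by (field; lra).
    exact HQz. }
  assert (HPQ : 2 * c1 * P z <= c2 * Q z).
  { destruct (Req_dec (P z) 0) as [E|E]; [rewrite E; lra|].
    assert (0 < P z) by (specialize (HP z ltac:(lra)); lra).
    apply Rmult_lt_compat_r with (r := c2 * P z) in HQP; [|nra].
    replace (2 * c1 / c2 * (c2 * P z)) with (2 * c1 * P z) in HQP by (field; lra).
    replace (Q z / P z * (c2 * P z)) with (c2 * Q z) in HQP by (field; lra).
    lra. }
  pose proof (Rle_abs (- M)). rewrite Rabs_Ropp in *. lra.
Qed.

Lemma nussbaum_integral_bound_unbounded_below (N : R -> R) (bl bu : R) :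
  enhanced_nussbaum N -> 0 < bl * bu ->
  forall M X, exists z, X <= z /\ nussbaum_integral_bound bl bu N z < M.
Proof.
  intros HN Hb M X.
  pose proof (enhanced_nussbaum_continuous N HN) as HNc.
  destruct HN as [_ [_ [HPinf [HQinf [HPQ HQP]]]]].
  assert (HP0 : forall z, 0 <= z -> 0 <= RInt (Defs.Npos N) 0 z).
  { intros z Hz. apply RInt_from_0_nonneg; [ | intros; apply Rmax_l | exact Hz].
    intros; apply continuous_Npos, HNc. }
  assert (HQ0 : forall z, 0 <= z -> 0 <= RInt (Defs.Nneg N) 0 z).
  { intros z Hz. apply RInt_from_0_nonneg; [ | intros; apply Rmax_l | exact Hz].
    intros; apply continuous_Nneg, HNc. }
  unfold nussbaum_integral_bound.
  destruct (Rlt_or_le 0 bl) as [Hbl|Hbl].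
  - assert (Hbu : 0 < bu) by (destruct (Rle_or_lt bu 0); [nra | assumption]).
    exact (ratio_escape _ _ bu bl Hbu Hbl HP0 HQinf HQP M X).
  - assert (Hbl' : 0 < - bl) by (destruct Hbl as [|E]; [lra | rewrite E in Hb; lra]).
    assert (Hbu : 0 < - bu) by (destruct (Rle_or_lt 0 bu); [nra | lra]).
    destruct (ratio_escape _ _ (- bl) (- bu) Hbl' Hbu HQ0 HPinf HPQ M X) as [z Hz].
    exists z. lra.
Qed.

(** * The closed loop *)

Lemma kappa_nonneg (delta ah x : R) : 0 <= delta -> 0 <= kappa delta ah x.
Proof.
  intros Hd. unfold kappa.
  assert (0 <= (ah * x) ^ 2) by apply pow2_ge_0.
  assert (0 <= x ^ 2) by apply pow2_ge_0.
  nra.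
Qed.

Lemma kappa_dominates_mismatch (delta ah x e : R) :
  Rabs e <= delta -> x * e + x * ah <= kappa delta ah x.
Proof.
  intros He. unfold kappa.
  assert (x * ah <= / 2 * ((ah * x) ^ 2 + 1)) by (pose proof (pow2_ge_0 (ah * x - 1)); nra).
  assert (x * e <= Rabs x * delta).
  { apply Rle_trans with (Rabs (x * e)); [apply Rle_abs|].
    rewrite Rabs_mult. apply Rmult_le_compat_l; [apply Rabs_pos | exact He]. }
  assert (Rabs x <= / 2 * (x ^ 2 + 1))
    by (rewrite <- pow2_abs; pose proof (pow2_ge_0 (Rabs x - 1)); nra).
  assert (0 <= delta) by (apply Rle_trans with (2 := He), Rabs_pos).
  nra.
Qed.

Section ClosedLoop.

Variables (a b : R -> R) (la delta bl bu lam k gam : R) (N x xi ah : R -> R)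
  (D : R -> Prop).
Hypotheses (Hdelta : 0 < delta) (Ha : forall t, Rabs (a t - la) <= delta)
  (Hbsign : 0 < bl * bu) (Hb : forall t, bl <= b t <= bu)
  (HD : locally_finite D)
  (Hlam : 0 < lam) (Hk : 0 < k) (Hgam : 0 < gam) (HN : enhanced_nussbaum N).
Hypotheses (Hx0 : filterlim x (at_right 0) (locally (x 0)))
  (Hxc : forall t, 0 < t -> continuous x t)
  (Hxdot : forall t, 0 < t -> ~ D t ->
     is_derive x t
       (b t * (N (xi t) * ((k + lam) * x t + kappa delta (ah t) (x t) * x t))
        + a t * x t ^ 2))
  (Hxi0 : filterlim xi (at_right 0) (locally (xi 0)))
  (Hxidot : forall t, 0 < t ->
     is_derive xi t
       (exp (lam * t) * (exp (lam * t) * x t)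
        * ((k + lam) * x t + kappa delta (ah t) (x t) * x t)))
  (Hah0 : filterlim ah (at_right 0) (locally (ah 0)))
  (Hahdot : forall t, 0 < t ->
     is_derive ah t (gam * exp (lam * t) * (exp (lam * t) * x t) * x t ^ 2))
  (Hxi_init : 0 <= xi 0).

Let mu t := exp (lam * t).
Let s t := mu t * x t.
Let kap t := kappa delta (ah t) (x t).
Let ubar t := (k + lam) * x t + kap t * x t.
Let u t := N (xi t) * ubar t.
Let xidot t := mu t * s t * ubar t.
Let ahdot t := gam * mu t * s t * x t ^ 2.
Let V t := / 2 * s t ^ 2 + / (2 * gam) * (la - ah t) ^ 2.
Let Phi := nussbaum_integral_bound bl bu N.
Let W t := V t - Phi (xi t).

Let HNc : forall z, continuous N z := enhanced_nussbaum_continuous N HN.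

Lemma xidot_eq t : xidot t = (k + lam + kap t) * s t ^ 2.
Proof. unfold xidot, ubar, s. ring. Qed.

Lemma xidot_nonneg t : 0 <= xidot t.
Proof.
  rewrite xidot_eq. apply Rmult_le_pos; [|apply pow2_ge_0].
  pose proof (kappa_nonneg delta (ah t) (x t) ltac:(lra)). unfold kap. lra.
Qed.

Lemma V_nonneg t : 0 <= V t.
Proof.
  unfold V. assert (0 < / (2 * gam)) by (apply Rinv_0_lt_compat; lra).
  pose proof (pow2_ge_0 (s t)). pose proof (pow2_ge_0 (la - ah t)). nra.
Qed.

Lemma V_dissipation t : 0 < t -> ~ D t ->
  exists dV, is_derive V t dV /\ dV <= - k * s t ^ 2 + (b t * N (xi t) + 1) * xidot t.
Proof.
  intros Ht HDt.
  set (dx := b t * (N (xi t) * ubar t) + a t * x t ^ 2).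
  set (dah := gam * mu t * s t * x t ^ 2).
  assert (Hdx : is_derive x t dx) by exact (Hxdot t Ht HDt).
  assert (Hdah : is_derive ah t dah) by exact (Hahdot t Ht).
  exists (s t * (lam * s t + mu t * dx) - / gam * (la - ah t) * dah). split.
  - unfold V, s, mu. auto_derive; [repeat split; eexists; eassumption|].
    replace (Derive (fun r => x r) t) with dx
      by (symmetry; exact (is_derive_unique _ _ _ Hdx)).
    replace (Derive (fun r => ah r) t) with dah
      by (symmetry; exact (is_derive_unique _ _ _ Hdah)).
    field. lra.
  - assert (E : - k * s t ^ 2 + (b t * N (xi t) + 1) * xidot t
                - (s t * (lam * s t + mu t * dx) - / gam * (la - ah t) * dah)
              = s t ^ 2 * (kap t - x t * (a t - la) - x t * ah t)).
    { unfold dx, dah, xidot, ubar, s. field. lra. }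
    pose proof (kappa_dominates_mismatch delta (ah t) (x t) (a t - la) (Ha t)).
    assert (0 <= s t ^ 2 * (kap t - x t * (a t - la) - x t * ah t)).
    { apply Rmult_le_pos; [apply pow2_ge_0 | unfold kap; lra]. }
    lra.
Qed.

Lemma W_derivative_nonpos t : 0 < t -> ~ D t ->
  exists d, is_derive W t d /\ d <= 0.
Proof.
  intros Ht HDt.
  destruct (V_dissipation t Ht HDt) as [dV [HdV HdVle]].
  set (slope := bu * Defs.Npos N (xi t) - bl * Defs.Nneg N (xi t) + 1).
  assert (HPhi : is_derive (fun r => Phi (xi r)) t (xidot t * slope)).
  { apply (is_derive_comp Phi xi t); [apply is_derive_nussbaum_integral_bound, HNc|].
    exact (Hxidot t Ht). }
  exists (dV - xidot t * slope). split.
  - exact (is_derive_minus V (fun r => Phi (xi r)) t dV _ HdV HPhi).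
  - pose proof (mul_N_le_nussbaum_slope N (b t) bl bu (xi t) (Hb t)).
    pose proof (xidot_nonneg t). pose proof (pow2_ge_0 (s t)).
    unfold slope. nra.
Qed.

Lemma W_filterlim {F : (R -> Prop) -> Prop} {FF : Filter F} (t0 : R) :
  filterlim x F (locally (x t0)) -> filterlim ah F (locally (ah t0)) ->
  filterlim xi F (locally (xi t0)) -> filterlim mu F (locally (mu t0)) ->
  filterlim W F (locally (W t0)).
Proof.
  intros Lx Lah Lxi Lmu. unfold W, V, s.
  apply (filterlim_Rplus _ (fun t => - Phi (xi t)));
    [apply filterlim_Rplus|].
  - apply (filterlim_continuous_comp (fun y => / 2 * y ^ 2) (fun t => mu t * x t)).
    + apply filterlim_Rmult; assumption.
    + apply (@ex_derive_continuous R_AbsRing R_NormedModule). auto_derive. trivial.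
  - apply (filterlim_continuous_comp (fun y => / (2 * gam) * (la - y) ^ 2) ah);
      [assumption|].
    apply (@ex_derive_continuous R_AbsRing R_NormedModule). auto_derive. trivial.
  - apply (filterlim_continuous_comp (fun z => - Phi z) xi); [assumption|].
    apply (continuous_comp Phi Ropp); [apply continuous_nussbaum_integral_bound, HNc|].
    apply (@filterlim_opp R_AbsRing R_NormedModule).
Qed.

Lemma continuous_mu t : continuous mu t.
Proof.
  apply (@ex_derive_continuous R_AbsRing R_NormedModule). unfold mu. auto_derive. trivial.
Qed.

Lemma continuous_xi t : 0 < t -> continuous xi t.
Proof.
  intros Ht. apply (@ex_derive_continuous R_AbsRing R_NormedModule).
  eexists. exact (Hxidot t Ht).
Qed.

Lemma W_le_W0 t : 0 <= t -> W t <= W 0.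
Proof.
  apply (nonincreasing_from_0 W D HD); [| |exact W_derivative_nonpos].
  - apply W_filterlim; [exact Hx0 | exact Hah0 | exact Hxi0 |].
    apply continuous_at_right, continuous_mu.
  - intros r Hr. apply W_filterlim; [apply Hxc, Hr | | apply continuous_xi, Hr |
      apply continuous_mu].
    apply (@ex_derive_continuous R_AbsRing R_NormedModule).
    eexists. exact (Hahdot r Hr).
Qed.

Lemma xi0_le_xi t : 0 <= t -> xi 0 <= xi t.
Proof.
  intros Ht. cut (- xi t <= - xi 0); [lra|].
  apply (nonincreasing_from_0 (fun r => - xi r) D HD); [| | |exact Ht].
  - apply (filterlim_continuous_comp Ropp xi); [exact Hxi0|].
    apply (@filterlim_opp R_AbsRing R_NormedModule).
  - intros r Hr. apply (continuous_comp xi Ropp); [apply continuous_xi, Hr|].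
    apply (@filterlim_opp R_AbsRing R_NormedModule).
  - intros r Hr _. exists (- xidot r). split.
    + apply (is_derive_opp xi r (xidot r)), Hxidot, Hr.
    + pose proof (xidot_nonneg r). lra.
Qed.

Lemma Phi_xi_lower_bound t : 0 <= t -> - W 0 <= Phi (xi t).
Proof.
  intros Ht. pose proof (W_le_W0 t Ht). pose proof (V_nonneg t). unfold W in *. lra.
Qed.

(* xi would have to cross a point z0 > xi 0 where Phi is below -W 0. *)
Lemma xi_bounded : bounded_on_nonneg xi.
Proof.
  destruct (nussbaum_integral_bound_unbounded_below N bl bu HN Hbsign
              (- W 0) (xi 0 + 1)) as [z0 [Hz0 HPhiz0]].
  exists z0. intros t Ht.
  pose proof (xi0_le_xi t Ht). rewrite Rabs_pos_eq by lra.
  destruct (Rle_or_lt (xi t) z0) as [|Hlt]; [assumption|exfalso].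
  assert (Ht0 : 0 < t) by (destruct Ht as [|<-]; [assumption | lra]).
  destruct (IVT_from_0 xi z0 t Hxi0 continuous_xi Ht0 ltac:(lra)) as [r [Hr Hxir]].
  pose proof (Phi_xi_lower_bound r (Rlt_le _ _ Hr)) as Hlow.
  rewrite Hxir in Hlow. unfold Phi in Hlow. lra.
Qed.

Lemma V_bounded : bounded_on_nonneg V.
Proof.
  destruct (bounded_on_nonneg_continuous_comp Phi xi
    (fun z => continuous_nussbaum_integral_bound bl bu N z HNc) xi_bounded) as [M HM].
  exists (W 0 + M). intros t Ht.
  pose proof (W_le_W0 t Ht). pose proof (Rle_abs (Phi (xi t))). pose proof (HM t Ht).
  rewrite Rabs_pos_eq by apply V_nonneg. unfold W in *. lra.
Qed.

Lemma s_bounded : bounded_on_nonneg s.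
Proof.
  apply bounded_on_nonneg_of_sqr, (bounded_on_nonneg_dominated _ V 2); [|exact V_bounded].
  intros t _. pose proof (V_nonneg t).
  assert (0 <= / (2 * gam) * (la - ah t) ^ 2)
    by (apply Rmult_le_pos; [apply Rlt_le, Rinv_0_lt_compat; lra | apply pow2_ge_0]).
  rewrite !Rabs_pos_eq by (auto using pow2_ge_0). unfold V in *. lra.
Qed.

Lemma ah_bounded : bounded_on_nonneg ah.
Proof.
  apply (bounded_on_nonneg_ext _ (fun t => la + (-1) * (la - ah t))); [intros; ring|].
  apply bounded_on_nonneg_plus; [apply bounded_on_nonneg_const|].
  apply bounded_on_nonneg_mult; [apply bounded_on_nonneg_const|].
  apply bounded_on_nonneg_of_sqr, (bounded_on_nonneg_dominated _ V (2 * gam));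
    [|exact V_bounded].
  intros t _. pose proof (V_nonneg t). pose proof (pow2_ge_0 (s t)).
  rewrite !Rabs_pos_eq by (auto using pow2_ge_0). unfold V.
  replace (2 * gam * (/ 2 * s t ^ 2 + / (2 * gam) * (la - ah t) ^ 2))
    with (gam * s t ^ 2 + (la - ah t) ^ 2) by (field; lra).
  nra.
Qed.

Lemma abs_x_eq t : Rabs (x t) = exp (- lam * t) * Rabs (s t).
Proof.
  unfold s, mu. rewrite Rabs_mult, (Rabs_pos_eq (exp _)) by apply Rlt_le, exp_pos.
  rewrite <- Rmult_assoc, <- exp_plus. replace (- lam * t + lam * t) with 0 by ring.
  rewrite exp_0. ring.
Qed.

Lemma x_exponential_decay :
  exists C, forall t, 0 <= t -> Rabs (x t) <= C * exp (- lam * t).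
Proof.
  destruct s_bounded as [C HC]. exists C. intros t Ht.
  rewrite abs_x_eq, Rmult_comm. apply Rmult_le_compat_r; [apply Rlt_le, exp_pos | auto].
Qed.

Lemma x_bounded : bounded_on_nonneg x.
Proof.
  apply (bounded_on_nonneg_dominated x s 1); [|exact s_bounded].
  intros t Ht. unfold s, mu.
  rewrite Rabs_mult, (Rabs_pos_eq (exp _)) by apply Rlt_le, exp_pos.
  assert (0 <= lam * t) by (apply Rmult_le_pos; lra).
  pose proof (exp_ineq1_le (lam * t)). pose proof (Rabs_pos (x t)). nra.
Qed.

Lemma kap_bounded : bounded_on_nonneg kap.
Proof.
  pose proof x_bounded. pose proof ah_bounded.
  unfold kap, kappa.
  repeat first [ apply bounded_on_nonneg_plus | apply bounded_on_nonneg_mult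
               | apply bounded_on_nonneg_pow | apply bounded_on_nonneg_const
               | assumption ].
Qed.

Lemma ubar_bounded : bounded_on_nonneg ubar.
Proof.
  pose proof x_bounded. pose proof kap_bounded. unfold ubar.
  repeat first [ assumption | apply bounded_on_nonneg_plus
               | apply bounded_on_nonneg_mult | apply bounded_on_nonneg_const ].
Qed.

Lemma u_bounded : bounded_on_nonneg u.
Proof.
  unfold u. apply bounded_on_nonneg_mult; [|exact ubar_bounded].
  exact (bounded_on_nonneg_continuous_comp N xi HNc xi_bounded).
Qed.

Lemma xidot_bounded : bounded_on_nonneg xidot.
Proof.
  apply (bounded_on_nonneg_ext _ _ (fun t _ => xidot_eq t)).
  apply bounded_on_nonneg_mult; [|apply bounded_on_nonneg_pow, s_bounded].
  apply bounded_on_nonneg_plus; [apply bounded_on_nonneg_const | exact kap_bounded].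
Qed.

Lemma ahdot_bounded : bounded_on_nonneg ahdot.
Proof.
  apply (bounded_on_nonneg_ext _ (fun t => gam * s t ^ 2 * x t));
    [intros; unfold ahdot, s; ring|].
  apply bounded_on_nonneg_mult; [|exact x_bounded].
  apply bounded_on_nonneg_mult; [apply bounded_on_nonneg_const|].
  apply bounded_on_nonneg_pow, s_bounded.
Qed.

Lemma closed_loop_properties :
  (forall t, 0 <= t -> xidot t = (k + lam + kap t) * s t ^ 2 /\ 0 <= xidot t) /\
  (forall t, 0 < t -> ~ D t ->
     exists dV, is_derive V t dV /\
       dV <= - k * s t ^ 2 + (b t * N (xi t) + 1) * xidot t) /\
  (exists M, forall t, 0 <= t ->
     Rabs (V t) <= M /\ Rabs (xi t) <= M /\ Rabs (x t) <= M /\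
     Rabs (ah t) <= M /\ Rabs (s t) <= M /\ Rabs (ubar t) <= M /\
     Rabs (u t) <= M /\ Rabs (xidot t) <= M /\ Rabs (ahdot t) <= M) /\
  (exists C, forall t, 0 <= t -> Rabs (x t) <= C * exp (- lam * t)).
Proof.
  split; [|split; [|split]].
  - intros t _. exact (conj (xidot_eq t) (xidot_nonneg t)).
  - exact V_dissipation.
  - destruct (bounded_on_nonneg_uniformly
      [V; xi; x; ah; s; ubar; u; xidot; ahdot]) as [M HM].
    + intros f Hf. repeat destruct Hf as [<- | Hf];
        [ exact V_bounded | exact xi_bounded | exact x_bounded | exact ah_bounded
        | exact s_bounded | exact ubar_bounded | exact u_bounded
        | exact xidot_bounded | exact ahdot_bounded | destruct Hf ].
    + exists M. intros t Ht. repeat split; apply (HM t Ht); simpl; auto 10.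
  - exact x_exponential_decay.
Qed.

End ClosedLoop.

Theorem mainTheorem5
  (a b : R -> R) (la delta bl bu : R)
  (lam k gam : R) (N : R -> R)
  (x xi ah : R -> R) (D : R -> Prop)
  (* plant parameters *)
  (Hdelta : 0 < delta)
  (Ha : forall t, Rabs (a t - la) <= delta)
  (Hbsign : 0 < bl * bu)
  (Hb : forall t, bl <= b t <= bu)
  (Hapc : piecewise_continuous a D)
  (* design parameters *)
  (Hlam : 0 < lam) (Hk : 0 < k) (Hgam : 0 < gam)
  (HN : enhanced_nussbaum N)
  (* closed-loop solution on [0,oo): x continuous, satisfying the ODE off the
     locally finite set D; xi, ahat continuously differentiable *)
  (Hx0 : filterlim x (at_right 0) (locally (x 0)))
  (Hxc : forall t, 0 < t -> continuous x t)
  (Hxdot : forall t, 0 < t -> ~ D t ->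
     is_derive x t
       (b t * (N (xi t) * ((k + lam) * x t + kappa delta (ah t) (x t) * x t))
        + a t * x t ^ 2))
  (Hxi0 : filterlim xi (at_right 0) (locally (xi 0)))
  (Hxidot : forall t, 0 < t ->
     is_derive xi t
       (exp (lam * t) * (exp (lam * t) * x t)
        * ((k + lam) * x t + kappa delta (ah t) (x t) * x t)))
  (Hah0 : filterlim ah (at_right 0) (locally (ah 0)))
  (Hahdot : forall t, 0 < t ->
     is_derive ah t (gam * exp (lam * t) * (exp (lam * t) * x t) * x t ^ 2))
  (Hxi_init : 0 <= xi 0) :
  let mu := fun t => exp (lam * t) in
  let s := fun t => mu t * x t in
  let ubar := fun t => (k + lam) * x t + kappa delta (ah t) (x t) * x t in
  let u := fun t => N (xi t) * ubar t in
  let xidot := fun t => mu t * s t * ubar t in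
  let ahdot := fun t => gam * mu t * s t * x t ^ 2 in
  let V := fun t => / 2 * s t ^ 2 + / (2 * gam) * (la - ah t) ^ 2 in
  (* 1. *)
  (forall t, 0 <= t ->
     xidot t = (k + lam + kappa delta (ah t) (x t)) * s t ^ 2 /\ 0 <= xidot t) /\
  (* 2. *)
  (forall t, 0 < t -> ~ D t ->
     exists dV, is_derive V t dV /\
       dV <= - k * s t ^ 2 + (b t * N (xi t) + 1) * xidot t) /\
  (* 3. *)
  (exists M, forall t, 0 <= t ->
     Rabs (V t) <= M /\ Rabs (xi t) <= M /\ Rabs (x t) <= M /\
     Rabs (ah t) <= M /\ Rabs (s t) <= M /\ Rabs (ubar t) <= M /\
     Rabs (u t) <= M /\ Rabs (xidot t) <= M /\ Rabs (ahdot t) <= M) /\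
  (exists C, forall t, 0 <= t -> Rabs (x t) <= C * exp (- lam * t)).
Proof.
  intros mu s ubar u xidot ahdot V.
  exact (closed_loop_properties a b la delta bl bu lam k gam N x xi ah D
           Hdelta Ha Hbsign Hb (proj1 Hapc) Hlam Hk Hgam HN
           Hx0 Hxc Hxdot Hxi0 Hxidot Hah0 Hahdot Hxi_init).
Qed.
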